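(* Let $\mathcal D=\{\mathbf D_i:i\in I\}$ be a class of upwards-closed dependency notions, and for each $i\in I$ let $\gamma_i:\mathbb N\to\mathbb N$ be such that $\mathbf D_i$ is $\gamma_i$-bounded. Let $\phi\in\mathbf{FO}(=\!(\cdot),\mathcal D,\sqcup)$ be a formula in which each $\mathbf D_i$ occurs $k_i$ times, and let $\nu_\phi(n)=\sum_{i\in I}k_i\gamma_i(n)$. Then for all finite structures $\mathfrak M$ and all teams $X$: if $\mathfrak M\models_X\phi$, then there exists $Y\subseteq X$ with $|Y|\le\nu_\phi(|M|)$ and $\mathfrak M\models_Y\phi$.
   Context: Team semantics (lax version). For a structure $\mathfrak M$ with domain $M$, a team $X$ is a (possibly empty) set of assignments $s:V\to M$, $V$ a finite set of variables; $X(\vec v)=\{s(\vec v):s\in X\}$. Satisfaction for formulas in negation normal form: first-order literal $\alpha$: every $s\in X$ satisfies $\alpha$ (Tarski); $\psi\vee\theta$: $X=Y\cup Z$ with $\mathfrak M\models_Y\psi$, $\mathfrak M\models_Z\theta$; $\psi\wedge\theta$: both; $\exists v\psi$: some $F:X\to\mathcal P(M)\setminus\{\emptyset\}$ with $\mathfrak M\models_{X[F/v]}\psi$, $X[F/v]=\{s[m/v]:s\in X,m\in F(s)\}$; $\forall v\psi$: $\mathfrak M\models_{X[M/v]}\psi$, $X[M/v]=\{s[m/v]:s\in X,m\in M\}$. A $k$-ary dependency notion $\mathbf D$ is an isomorphism-closed class of structures $(M,R)$, $R$ a $k$-ary relation; $\mathfrak M\models_X\mathbf D\vec v$ iff $(M,X(\vec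 v))\in\mathbf D$. $\mathbf D$ is upwards-closed if $(M,R)\in\mathbf D$, $R\subseteq S$ imply $(M,S)\in\mathbf D$. For $\gamma:\mathbb N\to\mathbb N$, $\mathbf D$ is $\gamma$-bounded if for all finite structures $\mathfrak M$, teams $X$ and tuples $\vec v$, whenever $\mathfrak M\models_X\mathbf D\vec v$ there is $Y\subseteq X$ with $|Y|\le\gamma(|M|)$ and $\mathfrak M\models_Y\mathbf D\vec v$. Constancy atoms (all arities): $\mathfrak M\models_X=\!(\vec v)$ iff $s(\vec v)=s'(\vec v)$ for all $s,s'\in X$. Classical disjunction: $\mathfrak M\models_X\phi\sqcup\psi$ iff $\mathfrak M\models_X\phi$ or $\mathfrak M\models_X\psi$. $\mathbf{FO}(=\!(\cdot),\mathcal D,\sqcup)$ is first-order logic in negation normal form extended with constancy atoms, the atoms of $\mathcal D$, and $\sqcup$. *)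

From mathcomp Require Import all_boot.
From mathcomp Require Import finmap.

Set Implicit Arguments.
Unset Strict Implicit.
Unset Printing Implicit Defensive.

Local Open Scope fset_scope.
Local Open Scope fmap_scope.

(* Variables are natural numbers.  An assignment with finite domain V is a
   finitely supported map {fmap nat -> M} with domf s = V.  A team is a finite
   set of assignments, all with the same domain. *)
Definition team_on (M : finType) (V : {fset nat}) (X : {fset {fmap nat -> M}}) :=
  forall s, s \in X -> domf s = V.

Definition teamrel (M : finType) (k : nat) (X : {fset {fmap nat -> M}})
    (vs : k.-tuple nat) : {set k.-tuple M} :=
  [set t : k.-tuple M |
     has (fun s : {fmap nat -> M} => [seq s.[? x] | x <- vs] == [seq Some y | y <- t])
         (enum_fset X)].

(* A k-ary dependency notion, given by its finite members (M, R), R a k-ary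
   relation on the finite set M. *)
Definition dep_notion (k : nat) := forall M : finType, {set k.-tuple M} -> Prop.

Definition iso_closed (k : nat) (D : dep_notion k) :=
  forall (M N : finType) (f : M -> N), bijective f ->
  forall R : {set k.-tuple M}, D M R <-> D N [set map_tuple f t | t in R].

Definition upwards_closed (k : nat) (D : dep_notion k) :=
  forall (M : finType) (R S : {set k.-tuple M}), R \subset S -> D M R -> D M S.

Definition bounded (k : nat) (D : dep_notion k) (gamma : nat -> nat) :=
  forall (M : finType) (V : {fset nat}) (X : {fset {fmap nat -> M}})
         (vs : k.-tuple nat),
  team_on V X -> {subset vs <= V} ->
  D M (teamrel X vs) ->
  exists Y : {fset {fmap nat -> M}},
    Y `<=` X /\ #|` Y| <= gamma #|M| /\ D M (teamrel Y vs).

Section Syntax.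
Variables (Fs Rs I : Type) (ar : I -> nat).

(* first-order terms over function symbols Fs (constants = 0-ary symbols) *)
Inductive term : Type :=
| TVar of nat
| TApp of Fs & seq term.

(* formulas of FO(=(.), D, \sqcup) in negation normal form *)
Inductive form : Type :=
| FEq of term & term
| FNeq of term & term
| FRel of Rs & seq term
| FNRel of Rs & seq term
| FConst of seq nat
| FDep (i : I) of (ar i).-tuple nat
| FAnd of form & form
| FOr of form & form            (* team (tensor) disjunction *)
| FCor of form & form           (* classical disjunction \sqcup *)
| FEx of nat & form
| FAll of nat & form.

Fixpoint tfv (t : term) : seq nat :=
  match t with
  | TVar x => [:: x]
  | TApp _ ts => (fix go ts := match ts with
                               | [::] => [::]
                               | t :: ts => tfv t ++ go ts end) ts
  end.

Definition tsfv (ts : seq term) : seq nat := flatten (map tfv ts).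

Fixpoint fv (phi : form) : seq nat :=
  match phi with
  | FEq t1 t2 | FNeq t1 t2 => tfv t1 ++ tfv t2
  | FRel _ ts | FNRel _ ts => tsfv ts
  | FConst vs => vs
  | FDep _ vs => vs
  | FAnd p q | FOr p q | FCor p q => fv p ++ fv q
  | FEx v p | FAll v p => [seq x <- fv p | x != v]
  end.

Fixpoint occ (phi : form) : seq I :=
  match phi with
  | FDep i _ => [:: i]
  | FAnd p q | FOr p q | FCor p q => occ p ++ occ q
  | FEx _ p | FAll _ p => occ p
  | _ => [::]
  end.

(* nu_phi(n) = sum_i k_i * gamma_i(n), written as a sum over occurrences *)
Definition nu (gamma : I -> nat -> nat) (phi : form) (n : nat) : nat :=
  \sum_(i <- occ phi) gamma i n.

Section Semantics.
Variables (M : finType) (funI : Fs -> seq M -> M) (relI : Rs -> seq M -> bool).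
Variable D : forall i : I, dep_notion (ar i).

Fixpoint teval (s : {fmap nat -> M}) (t : term) : option M :=
  match t with
  | TVar x => s.[? x]
  | TApp f ts =>
      omap (funI f)
        ((fix go ts := match ts with
                       | [::] => Some [::]
                       | t :: ts => match teval s t, go ts with
                                    | Some a, Some l => Some (a :: l)
                                    | _, _ => None end end) ts)
  end.

Fixpoint tseval (s : {fmap nat -> M}) (ts : seq term) : option (seq M) :=
  match ts with
  | [::] => Some [::]
  | t :: ts => match teval s t, tseval s ts with
               | Some a, Some l => Some (a :: l)
               | _, _ => None end
  end.

Definition supp_team (X : {fset {fmap nat -> M}}) (F : {fmap nat -> M} -> {fset M})
    (v : nat) : {fset {fmap nat -> M}} :=
  [fset s.[v <- m] | s in X, m in F s].

Definition dup_team (X : {fset {fmap nat -> M}}) (v : nat) : {fset {fmap nat -> M}} :=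
  [fset s.[v <- m] | s in X, m in [fset m0 | m0 in enum M]].

(* lax team semantics *)
Fixpoint sat (phi : form) (X : {fset {fmap nat -> M}}) : Prop :=
  match phi with
  | FEq t1 t2 => forall s, s \in X ->
      exists a, teval s t1 = Some a /\ teval s t2 = Some a
  | FNeq t1 t2 => forall s, s \in X ->
      exists a b, teval s t1 = Some a /\ teval s t2 = Some b /\ a <> b
  | FRel r ts => forall s, s \in X ->
      exists l, tseval s ts = Some l /\ relI r l
  | FNRel r ts => forall s, s \in X ->
      exists l, tseval s ts = Some l /\ ~~ relI r l
  | FConst vs => forall s s', s \in X -> s' \in X ->
      [seq s.[? x] | x <- vs] = [seq s'.[? x] | x <- vs]
  | FDep i vs => @D i M (teamrel X vs)
  | FAnd p q => sat p X /\ sat q X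
  | FOr p q => exists Y Z, X = Y `|` Z /\ sat p Y /\ sat q Z
  | FCor p q => sat p X \/ sat q X
  | FEx v p => exists F : {fmap nat -> M} -> {fset M},
      (forall s, s \in X -> F s != fset0) /\ sat p (supp_team X F v)
  | FAll v p => sat p (dup_team X v)
  end.

End Semantics.
End Syntax.

From mathcomp Require Import all_boot.
From mathcomp Require Import finmap.

(* The induction proves more than the theorem: a satisfied formula has a small
   subteam Y that is a "witness", i.e. every team between Y and X satisfies
   it.  Flat atoms are downwards closed (witness: the empty team), a
   dependency atom keeps a gamma-bounded subteam (upwards closure extends it to
   any larger team), conjunctions and disjunctions take the union of the
   witnesses, and a quantifier pulls a witness of X[F/v] back to X by choosing
   one preimage for each of its assignments. *)

Set Implicit Arguments.
Unset Strict Implicit.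

Local Open Scope fset_scope.
Local Open Scope fmap_scope.

Lemma sub_cat_seq (T : choiceType) (s1 s2 : seq T) (V : {fset T}) :
  {subset s1 ++ s2 <= V} -> {subset s1 <= V} /\ {subset s2 <= V}.
Proof.
by move=> sub; split=> x hx; apply: sub; rewrite mem_cat hx ?orbT.
Qed.

Lemma sub_filter_neq (T : choiceType) (s : seq T) (v : T) (V : {fset T}) :
  {subset [seq x <- s | x != v] <= V} -> {subset s <= v |` V}.
Proof.
move=> sub x hx; rewrite !inE; have [//|ne /=] := eqVneq x v.
by apply: sub; rewrite mem_filter ne.
Qed.

Lemma team_on_sub (M : finType) V (X Y : {fset {fmap nat -> M}}) :
  Y `<=` X -> team_on V X -> team_on V Y.
Proof. by move=> sYX tX s /(fsubsetP sYX); apply: tX. Qed.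

Lemma teamrelS (M : finType) k (Y Z : {fset {fmap nat -> M}}) (vs : k.-tuple nat) :
  Y `<=` Z -> teamrel Y vs \subset teamrel Z vs.
Proof.
move=> sYZ; apply/subsetP => t; rewrite !inE => /hasP [s hs e].
by apply/hasP; exists s => //; apply: (fsubsetP sYZ).
Qed.

Lemma supp_teamS (M : finType) (X Z : {fset {fmap nat -> M}}) F v :
  Z `<=` X -> supp_team Z F v `<=` supp_team X F v.
Proof.
move=> sZX; apply/fsubsetP => s' /imfset2P [s hs [m hm ->]].
by apply: in_imfset2 => //; apply: (fsubsetP sZX).
Qed.

Lemma team_on_supp (M : finType) V (X : {fset {fmap nat -> M}}) F v :
  team_on V X -> team_on (v |` V) (supp_team X F v).
Proof.
by move=> tX s' /imfset2P [s hs [m hm ->]]; rewrite dom_setf (tX s hs).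
Qed.

Lemma supp_team_preimage (M : finType) (X Y' : {fset {fmap nat -> M}}) F v :
  Y' `<=` supp_team X F v ->
  exists2 Y, Y `<=` X /\ #|` Y| <= #|` Y'| &
    forall Z, Y `<=` Z -> Y' `<=` supp_team Z F v.
Proof.
move=> sY'.
pose extends (s' s : {fmap nat -> M}) :=
  has (fun m => s.[v <- m] == s') (enum_fset (F s)).
pose pre s' := nth s' (enum_fset X) (find (extends s') (enum_fset X)).
have preP s' : s' \in Y' -> pre s' \in X /\ extends s' (pre s').
  move=> /(fsubsetP sY') /imfset2P [s hs [m hm e]].
  have ex : has (extends s') (enum_fset X).
    by apply/hasP; exists s => //; apply/hasP; exists m; rewrite // e.
  by split; [apply: mem_nth; rewrite -has_find | apply: nth_find].
exists [fset pre s' | s' in Y'].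
  split; last exact: leq_imfset_card.
  by apply/fsubsetP => x /imfsetP [s' hs' ->]; case: (preP s' hs').
move=> Z sZ; apply/fsubsetP => s' hs'.
have [_ /hasP [m hm /eqP <-]] := preP s' hs'.
by apply: in_imfset2 => //; apply: (fsubsetP sZ); apply: in_imfset.
Qed.

Lemma nu_cat (Fs Rs I : Type) (ar : I -> nat) (gamma : I -> nat -> nat)
    (psi p q : form Fs Rs ar) n :
  occ psi = occ p ++ occ q -> nu gamma psi n = (nu gamma p n + nu gamma q n)%N.
Proof. by rewrite /nu => ->; rewrite big_cat. Qed.

Unset Implicit Arguments.
Section Witnesses.
Context {Fs Rs I : Type} {ar : I -> nat}.
Context {D : forall i : I, dep_notion (ar i)} {gamma : I -> nat -> nat}.
Hypothesis D_up : forall i, upwards_closed (D i).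
Hypothesis D_bounded : forall i, bounded (D i) (gamma i).
Context {M : finType}.
Variables (funI : Fs -> seq M -> M) (relI : Rs -> seq M -> bool).

Notation form := (form Fs Rs ar).
Notation team := {fset {fmap nat -> M}}.
Notation sat := (sat funI relI D).

Definition witness (phi : form) (X Y : team) :=
  Y `<=` X /\ forall Z, Y `<=` Z -> Z `<=` X -> sat phi Z.

Lemma witness_sat {phi X Y} : witness phi X Y -> sat phi Y.
Proof. by case=> sYX W; apply: W. Qed.

Lemma witness0 phi X : (forall Z, Z `<=` X -> sat phi Z) -> witness phi X fset0.
Proof. by move=> down; split=> [|Z _]; [apply: fsub0set | apply: down]. Qed.

Lemma witness_dep {i} {vs : (ar i).-tuple nat} {V X} :
  team_on V X -> {subset vs <= V} -> sat (FDep Fs Rs vs) X ->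
  exists2 Y, #|` Y| <= gamma i #|M| & witness (FDep Fs Rs vs) X Y.
Proof.
move=> tX svs /(D_bounded i M V X vs tX svs) [Y [sYX [cY HY]]].
by exists Y => //; split=> // Z sYZ _; apply: D_up HY; apply: teamrelS.
Qed.

Lemma witness_and {p q X Y1 Y2} :
  witness p X Y1 -> witness q X Y2 -> witness (FAnd p q) X (Y1 `|` Y2).
Proof.
move=> [s1 W1] [s2 W2]; split=> [|Z]; first by rewrite fsubUset s1 s2.
by rewrite fsubUset => /andP [h1 h2] sZX; split; [apply: W1 | apply: W2].
Qed.

Lemma witness_or {p q X1 X2 Y1 Y2} :
  witness p X1 Y1 -> witness q X2 Y2 -> witness (FOr p q) (X1 `|` X2) (Y1 `|` Y2).
Proof.
move=> [s1 W1] [s2 W2]; split=> [|Z]; first exact: fsetUSS.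
rewrite fsubUset => /andP [h1 h2] sZX.
exists (Z `&` X1), (Z `&` X2); split; first by rewrite -fsetIUr; apply/esym/fsetIidPl.
by split; [apply: W1 | apply: W2]; rewrite ?fsubsetIr // fsubsetI ?h1 ?h2 ?s1 ?s2.
Qed.

Lemma witness_corl {p q X Y} : witness p X Y -> witness (FCor p q) X Y.
Proof. by move=> [sYX W]; split=> // Z sYZ sZX; left; apply: W. Qed.

Lemma witness_corr {p q X Y} : witness q X Y -> witness (FCor p q) X Y.
Proof. by move=> [sYX W]; split=> // Z sYZ sZX; right; apply: W. Qed.

Lemma witness_supp {P : team -> Prop} {p X F v Y'} :
  (forall Z, Z `<=` X -> sat p (supp_team Z F v) -> P Z) ->
  witness p (supp_team X F v) Y' ->
  exists2 Y, #|` Y| <= #|` Y'| & Y `<=` X /\ forall Z, Y `<=` Z -> Z `<=` X -> P Z.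
Proof.
move=> lift [sY' W].
have [Y [sYX cY] pre] := supp_team_preimage sY'.
exists Y => //; split=> // Z sYZ sZX.
by apply: lift => //; apply: W; [apply: pre | apply: supp_teamS].
Qed.

Lemma witness_ex {v p X F Y'} :
  (forall s, s \in X -> F s != fset0) -> witness p (supp_team X F v) Y' ->
  exists2 Y, #|` Y| <= #|` Y'| & witness (FEx v p) X Y.
Proof.
move=> F0; apply: witness_supp => Z sZX Hp.
by exists F; split=> // s /(fsubsetP sZX); apply: F0.
Qed.

Lemma witness_all {v p X Y'} :
  witness p (dup_team X v) Y' ->
  exists2 Y, #|` Y| <= #|` Y'| & witness (FAll v p) X Y.
Proof. exact: witness_supp. Qed.

Lemma small_witness (phi : form) {V X} :
  team_on V X -> {subset fv phi <= V} -> sat phi X ->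
  exists2 Y, #|` Y| <= nu gamma phi #|M| & witness phi X Y.
Proof.
elim: phi V X => [t1 t2|t1 t2|r ts|r ts|vs|i vs|p IHp q IHq|p IHp q IHq
                 |p IHp q IHq|v p IHp|v p IHp] V X tX /=.
1-5: move=> _ H; exists fset0; rewrite ?cardfs0 //.
1-5: by apply: witness0 => Z sZX s *; apply: H; apply: (fsubsetP sZX).
- by rewrite /nu big_seq1; apply: witness_dep tX.
- move=> /sub_cat_seq [sp sq] [Hp Hq].
  have [Y1 c1 W1] := IHp V X tX sp Hp; have [Y2 c2 W2] := IHq V X tX sq Hq.
  exists (Y1 `|` Y2); last exact: witness_and.
  rewrite (nu_cat gamma (p:=p) (q:=q)) //; exact: leq_trans (leq_card_fsetU _ _).1 (leq_add c1 c2).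
- move=> /sub_cat_seq [sp sq] [X1 [X2 [eX [Hp Hq]]]]; rewrite eX in tX *.
  have [Y1 c1 W1] := IHp V X1 (team_on_sub (fsubsetUl _ _) tX) sp Hp.
  have [Y2 c2 W2] := IHq V X2 (team_on_sub (fsubsetUr _ _) tX) sq Hq.
  exists (Y1 `|` Y2); last exact: witness_or.
  rewrite (nu_cat gamma (p:=p) (q:=q)) //; exact: leq_trans (leq_card_fsetU _ _).1 (leq_add c1 c2).
- move=> /sub_cat_seq [sp sq] [Hp|Hq].
  + have [Y c W] := IHp V X tX sp Hp; exists Y; last exact: witness_corl.
    by rewrite (nu_cat gamma (p:=p) (q:=q)) // (leq_trans c) ?leq_addr.
  + have [Y c W] := IHq V X tX sq Hq; exists Y; last exact: witness_corr.
    by rewrite (nu_cat gamma (p:=p) (q:=q)) // (leq_trans c) ?leq_addl.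
- move=> /sub_filter_neq sp [F [F0 Hp]].
  have [Y' c' W'] := IHp _ _ (team_on_supp tX) sp Hp.
  by have [Y c W] := witness_ex F0 W'; exists Y; first exact: leq_trans c'.
- move=> /sub_filter_neq sp Hp.
  have [Y' c' W'] := IHp _ _ (team_on_supp tX) sp Hp.
  by have [Y c W] := witness_all W'; exists Y; first exact: leq_trans c'.
Qed.

End Witnesses.

Theorem mainTheorem8 (Fs Rs I : Type) (ar : I -> nat)
    (D : forall i : I, dep_notion (ar i)) (gamma : I -> nat -> nat)
    (HDiso : forall i, iso_closed (D i))
    (HDup : forall i, upwards_closed (D i))
    (HDbd : forall i, bounded (D i) (gamma i))
    (phi : form Fs Rs ar)
    (M : finType) (funI : Fs -> seq M -> M) (relI : Rs -> seq M -> bool)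
    (V : {fset nat}) (X : {fset {fmap nat -> M}}) :
  team_on V X -> {subset fv phi <= V} ->
  sat funI relI D phi X ->
  exists Y : {fset {fmap nat -> M}},
    Y `<=` X /\ #|` Y| <= nu gamma phi #|M| /\ sat funI relI D phi Y.
Proof.
move=> tX sfv Hphi.
have [Y cY W] := small_witness HDup HDbd funI relI phi tX sfv Hphi.
by exists Y; split; [case: W | split; last exact: witness_sat W].
Qed.
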